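(* Let $U=\begin{pmatrix} a & b\\ c & d\end{pmatrix}$ be a $2\times 2$ unitary matrix with $abcd\neq 0$. Let $\Phi=\{{}^t[\alpha,\beta]\in\mathbf{C}^2:|\alpha|^2+|\beta|^2=1\}$ and define $$\Phi_s=\{\varphi\in\Phi: P(X_n^{\varphi}=k)=P(X_n^{\varphi}=-k)\text{ for all } n\in\mathbf{Z}_+,\ k\in\mathbf{Z}\},$$ $$\Phi_0=\{\varphi\in\Phi: E(X_n^{\varphi})=0\text{ for all } n\in\mathbf{Z}_+\},$$ $$\Phi_{\perp}=\{\varphi={}^t[\alpha,\beta]\in\Phi: |\alpha|=|\beta|,\ a\alpha\overline{b\beta}+\overline{a\alpha}b\beta=0\}.$$ Then $\Phi_s=\Phi_0=\Phi_{\perp}$.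
   Context: $\mathbf{Z}_+$ denotes the non-negative integers. Quantum random walk on $\mathbf{Z}$ determined by $U$: set $P=\begin{pmatrix} a & b\\ 0&0\end{pmatrix}$, $Q=\begin{pmatrix} 0&0\\ c & d\end{pmatrix}$. For $\varphi\in\Phi$, define amplitudes $\Psi_k(n)\in\mathbf{C}^2$ by $\Psi_0(0)=\varphi$, $\Psi_k(0)=0$ for $k\neq0$, and $\Psi_k(n+1)=P\Psi_{k+1}(n)+Q\Psi_{k-1}(n)$; $X_n^{\varphi}$ takes value $k$ with probability $P(X_n^{\varphi}=k)=\|\Psi_k(n)\|^2$. $\overline{z}$ denotes complex conjugate. *)

(* complex numbers R[i] over an arbitrary real closed field R
   (mathcomp-real-closed `complex`); R = reals gives the usual C. *)
From HB Require Import structures.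
From mathcomp Require Import all_boot all_order all_algebra.
From mathcomp Require Import complex.
Set Implicit Arguments. Unset Strict Implicit. Unset Printing Implicit Defensive.
Import Order.TTheory GRing.Theory Num.Theory.
Local Open Scope ring_scope.

Section QW.
Variable R : rcfType.
Local Notation C := R[i].

Definition mx2 (a b c d : C) : 'M[C]_2 :=
  \matrix_(i < 2, j < 2)
    if i == 0 then (if j == 0 then a else b) else (if j == 0 then c else d).

Definition col2 (x y : C) : 'cV[C]_2 :=
  \col_(i < 2) if i == 0 then x else y.

Definition unitary_mx (U : 'M[C]_2) : Prop :=
  U *m (map_mx Num.conj U)^T = 1%:M.

Definition sqnorm (v : 'cV[C]_2) : C :=
  `|v 0 0| ^+ 2 + `|v 1 0| ^+ 2.

Definition inPhi (phi : 'cV[C]_2) : Prop := sqnorm phi = 1.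

(* amplitudes Psi_k(n) of the walk determined by U = mx2 a b c d *)
Fixpoint Psi (a b c d : C) (phi : 'cV[C]_2) (n : nat) (k : int) : 'cV[C]_2 :=
  match n with
  | 0 => if k == 0 then phi else 0
  | n'.+1 => mx2 a b 0 0 *m Psi a b c d phi n' (k + 1)
             + mx2 0 0 c d *m Psi a b c d phi n' (k - 1)
  end.

Definition prob (a b c d : C) (phi : 'cV[C]_2) (n : nat) (k : int) : C :=
  sqnorm (Psi a b c d phi n k).

(* E(X_n^phi) = sum_k k P(X_n = k); X_n is supported on [-n, n]
   (sum taken over k = -n, ..., n) *)
Definition expect (a b c d : C) (phi : 'cV[C]_2) (n : nat) : C :=
  \sum_(0 <= i < (2 * n).+1)
     ((i%:Z - n%:Z)%:~R * prob a b c d phi n (i%:Z - n%:Z)).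

Definition inPhi_s (a b c d : C) (phi : 'cV[C]_2) : Prop :=
  inPhi phi /\
  forall (n : nat) (k : int), prob a b c d phi n k = prob a b c d phi n (- k).

Definition inPhi_0 (a b c d : C) (phi : 'cV[C]_2) : Prop :=
  inPhi phi /\ forall n : nat, expect a b c d phi n = 0.

Definition inPhi_perp (a b c d : C) (phi : 'cV[C]_2) : Prop :=
  inPhi phi /\
  let al := phi 0 0 in let be := phi 1 0 in
  `|al| = `|be| /\
  a * al * (b * be)^* + (a * al)^* * (b * be) = 0.

End QW.

From Pilot Require Import Defs.
From HB Require Import structures.
From mathcomp Require Import all_boot all_order all_algebra.
From mathcomp Require Import complex ring zify.
Set Implicit Arguments. Unset Strict Implicit. Unset Printing Implicit Defensive.
Import Order.TTheory GRing.Theory Num.Theory.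
Local Open Scope ring_scope.

(* A symmetric distribution has mean zero.  Conversely, let (u, v) = U (al, be)
   be the first step.  Then E(X_1) = |v|^2 - |u|^2, and once E(X_1) = 0,
   E(X_3) = 2 |b|^2 W with W = 2 Re (b conj(d) v conj(u)).  By unitarity
   |al|^2 - |be|^2 and 2 Re (a al conj(b be)) are linear combinations of
   E(X_1) and W, so E(X_1) = E(X_3) = 0 puts phi in Phi_perp.
   For phi in Phi_perp one gets a c al^2 = b d be^2, and then by induction on n
   (d/a)^k b d Psi_(-k)(n)_2 = lambda Psi_k(n)_1 and
   (d/a)^k a c Psi_(-k)(n)_1 = lambda Psi_k(n)_2 with lambda = b d be / al.
   As |d/a| = 1 and |lambda| = |b d| = |a c|, reflecting k swaps the moduli of
   the two components of Psi_k(n), which leaves P(X_n = k) unchanged. *)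

Lemma eq_normC (C : numClosedFieldType) (x y : C) :
  x * x^* = y * y^* -> `|x| = `|y|.
Proof. by move=> h; apply/eqP; rewrite -(@eqrXn2 _ 2) // !normCK h. Qed.

Lemma norm_exprz1 (F : numFieldType) (t : F) (k : int) :
  `|t| = 1 -> `|t ^ k| = 1.
Proof.
by move=> t1; case: k => n; rewrite /exprz ?normfV normrX t1 expr1n ?invr1.
Qed.

(* Primed variables stand for complex conjugates: all identities below are
   polynomial, so they are stated over an arbitrary field. *)
Section Unitary2.
Variables (F : fieldType) (a a' b b' c c' d d' : F).
Hypotheses (U00 : a * a' + b * b' = 1) (U01 : a * c' + b * d' = 0)
  (U10 : c * a' + d * b' = 0) (U11 : c * c' + d * d' = 1).

Lemma unitary2_diag : a * a' = d * d'.
Proof.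
apply/eqP; rewrite -subr_eq0; apply/eqP.
have -> : a * a' - d * d' = (a * a' + b * b' - 1) * d * d'
    - a * a' * (c * c' + d * d' - 1) + (a * c' + b * d') * a' * c
    - b * d' * (c * a' + d * b') by ring.
by rewrite U00 U11 U01 U10 !subrr; ring.
Qed.

Lemma unitary2_antidiag : b * b' = c * c'.
Proof.
have -> : b * b' = 1 - a * a' by rewrite -U00; ring.
by rewrite unitary2_diag -U11; ring.
Qed.

Hypotheses (a_neq0 : a != 0) (a'_neq0 : a' != 0) (b_neq0 : b != 0) (d_neq0 : d != 0).

Lemma unitary2_coefs :
  [/\ c = - (d * b') / a', c' = - (b * d') / a, b' = (1 - a * a') / b
    & d' = a * a' / d].
Proof.
split.
- by apply: (mulIf a'_neq0); rewrite mulfVK // -[LHS]subr0 -U10; ring.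
- by apply: (mulIf a_neq0); rewrite mulfVK // -[LHS]subr0 -U01; ring.
- by apply: (mulIf b_neq0); rewrite mulfVK // -U00; ring.
- by apply: (mulIf d_neq0); rewrite mulfVK // unitary2_diag mulrC.
Qed.

Variables (x x' y y' : F).
Local Notation u := (a * x + b * y).
Local Notation u' := (a' * x' + b' * y').
Local Notation v := (c * x + d * y).
Local Notation v' := (c' * x' + d' * y').
Local Notation W := (b * d' * v * u' + b' * d * v' * u).

Lemma expect3_poly_decomp :
  3%:R * (d * (d * v) * (d' * (d' * v')) - a * (a * u) * (a' * (a' * u')))
    + b * (d * v) * (b' * (d' * v'))
    + (c * (b * v) + d * (c * u)) * (c' * (b' * v') + d' * (c' * u'))
    - (a * (b * v) + b * (c * u)) * (a' * (b' * v') + b' * (c' * u'))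
    - c * (a * u) * (c' * (a' * u'))
  = 2%:R * b * b' * W - (3%:R * (a * a') ^+ 2 + (b * b') ^+ 2) * (u * u' - v * v').
Proof.
by case: unitary2_coefs => -> -> -> ->; field; rewrite ?a_neq0 ?a'_neq0 ?b_neq0 ?d_neq0.
Qed.

Lemma perp_of_step_balanced : u * u' = v * v' -> W = 0 ->
  x * x' = y * y' /\ a * b' * x * y' + a' * b * x' * y = 0.
Proof.
move=> uv W0; have K0 : u * u' - v * v' = 0 by rewrite uv subrr.
have eX : x * x' - y * y' = (a * a' - b * b') * (u * u' - v * v') - 2%:R * W.
  by case: unitary2_coefs => -> -> -> ->; field; rewrite ?a_neq0 ?a'_neq0 ?b_neq0 ?d_neq0.
have eZ : a * b' * x * y' + a' * b * x' * y
    = 2%:R * (a * a') * (b * b') * (u * u' - v * v') + (a * a' - b * b') * W.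
  by case: unitary2_coefs => -> -> -> ->; field; rewrite ?a_neq0 ?a'_neq0 ?b_neq0 ?d_neq0.
split; last by rewrite eZ K0 W0; ring.
by apply/eqP; rewrite -subr_eq0 eX K0 W0 !mulr0 subr0.
Qed.

Lemma ac_bd_of_perp : y' != 0 -> x * x' = y * y' ->
  a * b' * x * y' + a' * b * x' * y = 0 -> a * c * x ^+ 2 = b * d * y ^+ 2.
Proof.
move=> y'_neq0 xy Z0; apply: (mulIf (mulf_neq0 a'_neq0 y'_neq0)).
apply/eqP; rewrite -subr_eq0.
have -> : a * c * x ^+ 2 * (a' * y') - b * d * y ^+ 2 * (a' * y')
  = a * x ^+ 2 * y' * (c * a' + d * b') + a' * b * d * y * (x * x' - y * y')
    - d * x * (a * b' * x * y' + a' * b * x' * y) by ring.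
by rewrite U10 xy Z0 subrr; apply/eqP; ring.
Qed.
End Unitary2.

Lemma unitary_mx2P (R : rcfType) (a b c d : R[i]) :
  unitary_mx (mx2 a b c d) ->
  [/\ a * a^* + b * b^* = 1, a * c^* + b * d^* = 0, c * a^* + d * b^* = 0
    & c * c^* + d * d^* = 1].
Proof.
move/matrixP=> U; move: (U 0 0) (U 0 1) (U 1 0) (U 1 1).
by rewrite !mxE !big_ord_recl !big_ord0 !mxE /= !addr0 => -> -> -> ->.
Qed.

Section Walk.
Variables (R : rcfType) (a b c d : R[i]) (phi : 'cV[R[i]]_2).
Local Notation Psi := (Psi a b c d phi).
Local Notation prob := (prob a b c d phi).
Local Notation expect := (expect a b c d phi).
Local Notation al := (phi 0 0).
Local Notation be := (phi 1 0).

Lemma mulmx_mx2 (p q r s : R[i]) (v : 'cV[R[i]]_2) :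
  (mx2 p q r s *m v) 0 0 = p * v 0 0 + q * v 1 0 /\
  (mx2 p q r s *m v) 1 0 = r * v 0 0 + s * v 1 0.
Proof.
have lift00 : lift ord0 ord0 = 1 :> 'I_2 by apply: val_inj.
by rewrite !mxE !big_ord_recl !big_ord0 !mxE /= !addr0 lift00; split.
Qed.

Lemma Psi0E k i : Psi 0 k i 0 = if k == 0 then phi i 0 else 0.
Proof. by rewrite /=; case: (k == 0); rewrite ?mxE. Qed.

Lemma PsiS_top n k :
  Psi n.+1 k 0 0 = a * Psi n (k + 1) 0 0 + b * Psi n (k + 1) 1 0.
Proof.
rewrite /= mxE (mulmx_mx2 a b 0 0 _).1 (mulmx_mx2 0 0 c d _).1.
by rewrite !(mul0r, addr0).
Qed.

Lemma PsiS_bot n k :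
  Psi n.+1 k 1 0 = c * Psi n (k - 1) 0 0 + d * Psi n (k - 1) 1 0.
Proof.
rewrite /= mxE (mulmx_mx2 a b 0 0 _).2 (mulmx_mx2 0 0 c d _).2.
by rewrite !(mul0r, add0r).
Qed.

Local Notation u := (a * al + b * be).
Local Notation v := (c * al + d * be).

Lemma expect1E : expect 1 = `|v| ^+ 2 - `|u| ^+ 2.
Proof.
rewrite /expect /Defs.prob /sqnorm !big_nat_recr // big_geq // add0r.
rewrite !PsiS_top !PsiS_bot !Psi0E /= !(mulr0, addr0, normr0) expr0n /=.
ring.
Qed.

(* [Psi] is abstracted first: otherwise matching compares distinct [Psi n k]
   by unfolding the recursion. *)
Lemma expect3E :
  expect 3 = 3%:R * (`|d * (d * v)| ^+ 2 - `|a * (a * u)| ^+ 2)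
    + `|b * (d * v)| ^+ 2 + `|c * (b * v) + d * (c * u)| ^+ 2
    - `|a * (b * v) + b * (c * u)| ^+ 2 - `|c * (a * u)| ^+ 2.
Proof.
rewrite /expect /Defs.prob /sqnorm !big_nat_recr // big_geq // add0r.
move: PsiS_top PsiS_bot Psi0E; move: Psi => f f_top f_bot f0.
rewrite !(f_top, f_bot) !f0 /= !(mulr0, addr0, add0r, normr0) /=.
ring.
Qed.

Lemma expect_eq0_of_sym n :
  (forall k, prob n k = prob n (- k)) -> expect n = 0.
Proof.
move=> sym; have antisym : expect n = - expect n.
  rewrite {1}/expect big_nat_rev /= -sumrN; apply: eq_big_nat => i /andP[_ lt_i].
  have -> : (0 + (2 * n).+1 - i.+1)%N%:Z - n%:Z = - (i%:Z - n%:Z) by lia.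
  by rewrite mulrNz -sym mulNr.
have /eqP : expect n *+ 2 = 0 by rewrite mulr2n {1}antisym addNr.
by rewrite mulrn_eq0 => /eqP.
Qed.

Section Reflection.
Hypotheses (a_neq0 : a != 0) (b_neq0 : b != 0) (d_neq0 : d != 0)
  (al_neq0 : al != 0) (ac_bd : a * c * al ^+ 2 = b * d * be ^+ 2).
Local Notation lambda := (b * d * be / al).

Lemma Psi_reflect n k :
  (d / a) ^ k * (b * d * Psi n (- k) 1 0) = lambda * Psi n k 0 0 /\
  (d / a) ^ k * (a * c * Psi n (- k) 0 0) = lambda * Psi n k 1 0.
Proof.
have da_neq0 : d / a != 0 by rewrite mulf_neq0 ?invr_eq0.
elim: n k => [|n IHn] k.
  rewrite !Psi0E oppr_eq0; case: eqP => [->|_]; last by rewrite !mulr0.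
  rewrite expr0z !mul1r; split; first by field.
  transitivity (a * c * al ^+ 2 / al); first by field.
  by rewrite ac_bd; field.
have [top_succ bot_succ] := IHn (k + 1); have [top_pred bot_pred] := IHn (k - 1).
rewrite opprD in top_succ bot_succ.
rewrite opprB [1 - k]addrC in top_pred bot_pred.
rewrite !(PsiS_top, PsiS_bot); split.
  rewrite [in RHS]mulrDr ![lambda * (_ * _)]mulrCA -top_succ -bot_succ.
  by rewrite expfzDr // expr1z; field.
rewrite [in RHS]mulrDr ![lambda * (_ * _)]mulrCA -top_pred -bot_pred.
by rewrite -{1}(subrK 1 k) expfzDr // expr1z; field.
Qed.

Hypotheses (a_d : `|a| = `|d|) (b_c : `|b| = `|c|) (al_be : `|al| = `|be|).

Lemma prob_reflect n k : prob n (- k) = prob n k.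
Proof.
have [top bot] := Psi_reflect n k.
have da1 : `|(d / a) ^ k| = 1.
  by apply: norm_exprz1; rewrite normf_div a_d divff // normr_eq0.
have lambda_bd : `|lambda| = `|b * d|.
  by rewrite normf_div normrM -al_be mulfK // normr_eq0.
have ac_bd' : `|a * c| = `|b * d| by rewrite !normrM a_d b_c mulrC.
have bd_neq0 : `|b * d| != 0 by rewrite normr_eq0 mulf_neq0.
have top' : `|Psi n (- k) 1 0| = `|Psi n k 0 0|.
  apply: (mulfI bd_neq0).
  by rewrite -{2}lambda_bd -[LHS]mul1r -da1 -!normrM top.
have bot' : `|Psi n (- k) 0 0| = `|Psi n k 1 0|.
  apply: (mulfI bd_neq0).
  by rewrite -{1}ac_bd' -lambda_bd -[LHS]mul1r -da1 -!normrM bot.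
by rewrite /Defs.prob /sqnorm top' bot' addrC.
Qed.
End Reflection.
End Walk.

Lemma mulf4_neq0 (F : idomainType) (a b c d : F) :
  a * b * c * d != 0 -> [&& a != 0, b != 0, c != 0 & d != 0].
Proof. by rewrite !mulf_eq0 !negb_or -!andbA. Qed.

Lemma inPhi_0_of_s (R : rcfType) (a b c d : R[i]) (phi : 'cV[R[i]]_2) :
  inPhi_s a b c d phi -> inPhi_0 a b c d phi.
Proof. by case=> unit sym; split=> // n; apply: expect_eq0_of_sym. Qed.

Lemma inPhi_perp_of_0 (R : rcfType) (a b c d : R[i]) (phi : 'cV[R[i]]_2) :
  unitary_mx (mx2 a b c d) -> a * b * c * d != 0 ->
  inPhi_0 a b c d phi -> inPhi_perp a b c d phi.
Proof.
move=> /unitary_mx2P[U00 U01 U10 U11] abcd_neq0 [unit E]; split=> //=.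
have /and4P[a_neq0 b_neq0 _ d_neq0] := mulf4_neq0 abcd_neq0.
have a'_neq0 : a^* != 0 by rewrite conjC_eq0.
move: (E 1%N) (E 3%N); rewrite expect1E expect3E !normCK !(rmorphD, rmorphM).
move=> /eqP; rewrite subr_eq0 eq_sym => /eqP E1.
rewrite (expect3_poly_decomp U00 U01 U10 U11) // E1 subrr mulr0 subr0.
move=> /eqP; rewrite !mulf_eq0 pnatr_eq0 conjC_eq0 (negbTE b_neq0) /= => /eqP W0.
have [xy Z0] := perp_of_step_balanced U00 U01 U10 U11 a_neq0 a'_neq0 b_neq0 d_neq0 E1 W0.
by split; [apply: eq_normC | rewrite -[RHS]Z0; ring].
Qed.

Lemma inPhi_balanced_neq0 (R : rcfType) (phi : 'cV[R[i]]_2) :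
  inPhi phi -> `|phi 0 0| = `|phi 1 0| -> phi 0 0 != 0 /\ phi 1 0 != 0.
Proof.
move=> unit al_be.
have al_neq0 : phi 0 0 != 0.
  apply/eqP=> al0; move: unit; rewrite /inPhi /sqnorm -al_be al0 normr0.
  by rewrite expr0n addr0 => /eqP; rewrite eq_sym oner_eq0.
by split=> //; rewrite -normr_eq0 -al_be normr_eq0.
Qed.

Lemma inPhi_s_of_perp (R : rcfType) (a b c d : R[i]) (phi : 'cV[R[i]]_2) :
  unitary_mx (mx2 a b c d) -> a * b * c * d != 0 ->
  inPhi_perp a b c d phi -> inPhi_s a b c d phi.
Proof.
move=> /unitary_mx2P[U00 U01 U10 U11] abcd_neq0 [unit /= [al_be Z0]].
split=> // n k.
have /and4P[a_neq0 b_neq0 _ d_neq0] := mulf4_neq0 abcd_neq0.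
have [al_neq0 be_neq0] := inPhi_balanced_neq0 unit al_be.
have xy : phi 0 0 * (phi 0 0)^* = phi 1 0 * (phi 1 0)^* by rewrite -!normCK al_be.
have Z0' : a * b^* * phi 0 0 * (phi 1 0)^* + a^* * b * (phi 0 0)^* * phi 1 0 = 0.
  by rewrite -Z0 !rmorphM; ring.
have ac_bd : a * c * phi 0 0 ^+ 2 = b * d * phi 1 0 ^+ 2.
  by apply: (ac_bd_of_perp U10) xy Z0'; rewrite conjC_eq0.
have a_d := eq_normC (unitary2_diag U00 U01 U10 U11).
have b_c := eq_normC (unitary2_antidiag U00 U01 U10 U11).
by rewrite (prob_reflect a_neq0 b_neq0 d_neq0 al_neq0 ac_bd a_d b_c al_be).
Qed.

Theorem theorem4 (R : rcfType) (a b c d : R[i]) :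
  unitary_mx (mx2 a b c d) -> a * b * c * d != 0 ->
  forall phi : 'cV[R[i]]_2,
    (inPhi_s a b c d phi <-> inPhi_0 a b c d phi) /\
    (inPhi_0 a b c d phi <-> inPhi_perp a b c d phi).
Proof.
move=> U abcd_neq0 phi.
have perp_of_0 := @inPhi_perp_of_0 R a b c d phi U abcd_neq0.
have s_of_perp := @inPhi_s_of_perp R a b c d phi U abcd_neq0.
split; split.
- exact: inPhi_0_of_s.
- by move=> /perp_of_0/s_of_perp.
- exact: perp_of_0.
- by move=> /s_of_perp/inPhi_0_of_s.
Qed.
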